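(* Let $\mathrm{cleaf}_2:\mathbb{R}\to\mathbb{R}$ be the leaf function of basis $2$. For every real $l$ with $c:=\mathrm{cleaf}_2(l)\neq-1$, $$\Bigl(\mathrm{cleaf}_2\Bigl(\frac l2\Bigr)\Bigr)^2=\frac{-1+c+\sqrt2\sqrt{1+c^2}}{1+c}.$$
   Context: For a natural number $n$, the leaf function $\mathrm{cleaf}_n:\mathbb{R}\to\mathbb{R}$ is the solution of $\frac{\mathrm{d}^2r}{\mathrm{d}l^2}=-n\,r^{2n-1}$ with $r(0)=1$, $r'(0)=0$. *)

From Stdlib Require Import Reals.
From Coquelicot Require Import Coquelicot.
Open Scope R_scope.

(* [is_cleaf n r] : r : R -> R is a (global, twice differentiable) solution of
   r'' = - n r^(2n-1), r(0) = 1, r'(0) = 0, i.e. r is the leaf function cleaf_n.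
   r' denotes the derivative of r. *)
Definition is_cleaf (n : nat) (r : R -> R) : Prop :=
  exists r' : R -> R,
    (forall l, is_derive r l (r' l)) /\
    (forall l, is_derive r' l (- INR n * r l ^ (2 * n - 1))) /\
    r 0 = 1 /\ r' 0 = 0.

From Stdlib Require Import Reals Lra.
From Coquelicot Require Import Coquelicot.
Open Scope R_scope.

(* The energy r'^2 + r^4 is conserved, so r'^2 = 1 - r^4.  Modulo this relation the
   lemniscatic addition formula r (x + y) = add_num / add_den holds: evaluated at
   (t, x + y - t) the quotient has zero derivative, by a polynomial identity, and
   equals r (x + y) at t = 0.  For x = y = l/2 and X = r (l/2)^2 the numerator and
   the denominator share the factor 1 + X, leaving
   r l = (X^2 + 2X - 1) / (1 + 2X - X^2), a quadratic equation in X whose only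
   nonnegative root is the claimed one. *)

Lemma const_of_is_derive_0 (f : R -> R) :
  (forall t, is_derive f t 0) -> forall x y, f x = f y.
Proof.
  intros Hf x y.
  destruct (Rtotal_order x y) as [Hxy | [-> | Hxy]].
  - apply eq_is_derive; [intros t _; apply Hf | exact Hxy].
  - reflexivity.
  - symmetry; apply eq_is_derive; [intros t _; apply Hf | exact Hxy].
Qed.

Section Energy.

Variables (n : nat) (r r' : R -> R).
Hypothesis r_deriv : forall l, is_derive r l (r' l).
Hypothesis r'_deriv : forall l, is_derive r' l (- INR n * r l ^ (2 * n - 1)).
Hypotheses (r_0 : r 0 = 1) (r'_0 : r' 0 = 0).

Lemma cleaf_energy t : r' t ^ 2 + r t ^ (2 * n) = 1.
Proof.
  assert (Hconst : forall u, is_derive (fun t => r' t ^ 2 + r t ^ (2 * n)) u 0).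
  { intro u.
    replace 0 with (INR 2 * (- INR n * r u ^ (2 * n - 1)) * r' u ^ Nat.pred 2
                    + INR (2 * n) * r' u * r u ^ Nat.pred (2 * n)).
    - apply (is_derive_plus (fun t => r' t ^ 2) (fun t => r t ^ (2 * n)));
        apply is_derive_pow; auto.
    - rewrite mult_INR, Nat.sub_1_r; simpl; ring. }
  rewrite (const_of_is_derive_0 _ Hconst t 0), r_0, r'_0, pow1; ring.
Qed.

End Energy.

Definition add_num (a p b q : R) : R := a * b * (1 + a ^ 2) * (1 + b ^ 2) - p * q.
Definition add_den (a p b q : R) : R := (1 + a ^ 2) * (1 + b ^ 2) + a * b * p * q.

(* The derivatives of [add_num] and [add_den] along the flow
   a' = p, p' = -2a^3, b' = -q, q' = 2b^3 followed by
   (cleaf_2 t, cleaf_2' t, cleaf_2 (l - t), cleaf_2' (l - t)). *)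
Definition add_num_dot (a p b q : R) : R :=
  p * b * (1 + a ^ 2) * (1 + b ^ 2) - a * q * (1 + a ^ 2) * (1 + b ^ 2)
  + 2 * a ^ 2 * b * p * (1 + b ^ 2) - 2 * a * b ^ 2 * q * (1 + a ^ 2)
  + 2 * a ^ 3 * q - 2 * b ^ 3 * p.
Definition add_den_dot (a p b q : R) : R :=
  2 * a * p * (1 + b ^ 2) - 2 * b * q * (1 + a ^ 2)
  + b * p ^ 2 * q - a * p * q ^ 2 - 2 * a ^ 4 * b * q + 2 * a * b ^ 4 * p.

Lemma add_num_den_wronskian a p b q :
  p ^ 2 = 1 - a ^ 4 -> q ^ 2 = 1 - b ^ 4 ->
  add_num_dot a p b q * add_den a p b q = add_num a p b q * add_den_dot a p b q.
Proof.
  intros Hp Hq.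
  apply Rminus_diag_uniq.
  transitivity
    ((2*a*b^2*q + 2*a^3*b^2*q + 2*a^3*b^4*q + 2*a*q + p*b*q^2 - a*q^3) * (p^2 - 1 + a^4)
     + (-2*a^2*p*b - 2*a^2*p*b^3 - 2*a^4*p*b^3 - p*b - a^4*p*b - a*q + a^5*q) * (q^2 - 1 + b^4)).
  - unfold add_num, add_den, add_num_dot, add_den_dot; ring.
  - rewrite Hp, Hq; ring.
Qed.

Lemma add_den_gt0 a p b q :
  p ^ 2 = 1 - a ^ 4 -> q ^ 2 = 1 - b ^ 4 -> 0 < add_den a p b q.
Proof.
  intros Hp Hq.
  (* |a p| <= (1 + a^2) / 2, since (1 + a^2)^2 - 4 a^2 (1 - a^4) = (1 - a^2)^2 + 4 a^6. *)
  assert (Hap : (2 * a * p) ^ 2 <= (1 + a ^ 2) ^ 2)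
    by (replace ((2 * a * p) ^ 2) with (4 * a ^ 2 * p ^ 2) by ring; rewrite Hp; nra).
  assert (Hbq : (2 * b * q) ^ 2 <= (1 + b ^ 2) ^ 2)
    by (replace ((2 * b * q) ^ 2) with (4 * b ^ 2 * q ^ 2) by ring; rewrite Hq; nra).
  assert (Habpq : (4 * a * b * p * q) ^ 2 <= ((1 + a ^ 2) * (1 + b ^ 2)) ^ 2).
  { replace ((4 * a * b * p * q) ^ 2) with ((2 * a * p) ^ 2 * (2 * b * q) ^ 2) by ring.
    replace (((1 + a ^ 2) * (1 + b ^ 2)) ^ 2) with ((1 + a ^ 2) ^ 2 * (1 + b ^ 2) ^ 2) by ring.
    apply Rmult_le_compat; try apply pow2_ge_0; assumption. }
  unfold add_den; nra.
Qed.

Section Leaf2.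

Variables r r' : R -> R.
Hypothesis r_deriv : forall l, is_derive r l (r' l).
Hypothesis r'_deriv : forall l, is_derive r' l (- INR 2 * r l ^ (2 * 2 - 1)).
Hypotheses (r_0 : r 0 = 1) (r'_0 : r' 0 = 0).

Lemma leaf2_energy t : r' t ^ 2 = 1 - r t ^ 4.
Proof. pose proof (cleaf_energy 2 r r' r_deriv r'_deriv r_0 r'_0 t); simpl in *; lra. Qed.

Lemma leaf2_ge_neg1 t : -1 <= r t.
Proof.
  pose proof (leaf2_energy t); pose proof (pow2_ge_0 (r' t)).
  assert (r t ^ 2 <= 1) by nra.
  nra.
Qed.

Lemma Derive_leaf2 x : Derive r x = r' x.
Proof. exact (is_derive_unique _ _ _ (r_deriv x)). Qed.

Lemma Derive_leaf2' x : Derive r' x = - 2 * r x ^ 3.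
Proof. rewrite (is_derive_unique _ _ _ (r'_deriv x)); simpl; ring. Qed.

Lemma ex_derive_leaf2 x : ex_derive r x.
Proof. eexists; apply r_deriv. Qed.

Lemma ex_derive_leaf2' x : ex_derive r' x.
Proof. eexists; apply r'_deriv. Qed.

Ltac leaf2_auto_derive :=
  auto_derive;
  [ repeat apply conj; try exact I; first [apply ex_derive_leaf2 | apply ex_derive_leaf2']
  | rewrite !Derive_leaf2, !Derive_leaf2'; unfold Rminus; ring ].

Lemma is_derive_add_num l t :
  is_derive (fun t => add_num (r t) (r' t) (r (l - t)) (r' (l - t))) t
    (add_num_dot (r t) (r' t) (r (l - t)) (r' (l - t))).
Proof. unfold add_num, add_num_dot; leaf2_auto_derive. Qed.

Lemma is_derive_add_den l t :
  is_derive (fun t => add_den (r t) (r' t) (r (l - t)) (r' (l - t))) t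
    (add_den_dot (r t) (r' t) (r (l - t)) (r' (l - t))).
Proof. unfold add_den, add_den_dot; leaf2_auto_derive. Qed.

Lemma leaf2_add x y :
  r (x + y) = add_num (r x) (r' x) (r y) (r' y) / add_den (r x) (r' x) (r y) (r' y).
Proof.
  pose (N t := add_num (r t) (r' t) (r (x + y - t)) (r' (x + y - t))).
  pose (D t := add_den (r t) (r' t) (r (x + y - t)) (r' (x + y - t))).
  assert (HF : forall t, is_derive (fun t => N t / D t) t 0).
  { intro t.
    pose proof (add_den_gt0 _ _ _ _ (leaf2_energy t) (leaf2_energy (x + y - t))) as HD.
    replace 0 with
      ((add_num_dot (r t) (r' t) (r (x + y - t)) (r' (x + y - t)) * D t
        - N t * add_den_dot (r t) (r' t) (r (x + y - t)) (r' (x + y - t))) / D t ^ 2).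
    - apply is_derive_div; [apply is_derive_add_num | apply is_derive_add_den | apply Rgt_not_eq, HD].
    - unfold N, D; rewrite add_num_den_wronskian by apply leaf2_energy.
      unfold Rminus; rewrite Rplus_opp_r; apply Rdiv_0_l. }
  pose proof (const_of_is_derive_0 _ HF x 0) as HFx0; unfold N, D in HFx0.
  replace (x + y - x) with y in HFx0 by ring.
  rewrite HFx0, Rminus_0_r, r_0, r'_0.
  unfold add_num, add_den.
  field; pose proof (pow2_ge_0 (r (x + y))); lra.
Qed.

Lemma leaf2_duplication l :
  r (2 * l) * (1 + 2 * r l ^ 2 - r l ^ 4) = r l ^ 4 + 2 * r l ^ 2 - 1.
Proof.
  replace (2 * l) with (l + l) by ring.
  rewrite leaf2_add.
  pose proof (leaf2_energy l) as Hp.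
  set (s := r l) in *; set (p := r' l) in *.
  replace (add_num s p s p) with ((1 + s ^ 2) * (s ^ 4 + 2 * s ^ 2 - 1))
    by (unfold add_num; replace (p * p) with (p ^ 2) by ring; rewrite Hp; ring).
  replace (add_den s p s p) with ((1 + s ^ 2) * (1 + 2 * s ^ 2 - s ^ 4))
    by (unfold add_den; replace (s * s * p * p) with (s ^ 2 * p ^ 2) by ring; rewrite Hp; ring).
  field; split; nra.
Qed.

End Leaf2.

Lemma half_angle_root c x :
  -1 < c -> 0 <= x -> c * (1 + 2 * x - x ^ 2) = x ^ 2 + 2 * x - 1 ->
  x = (-1 + c + sqrt 2 * sqrt (1 + c ^ 2)) / (1 + c).
Proof.
  intros Hc Hx Hcx.
  set (y := (1 + c) * x + 1 - c).
  assert (Hy2 : y ^ 2 = 2 * (1 + c ^ 2)) by (unfold y; nra).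
  (* y >= 1 - c, while y^2 - (1 - c)^2 = (1 + c)^2 > 0 *)
  assert (Hy : 0 <= y) by (unfold y in *; nra).
  assert (Hsqrt : sqrt 2 * sqrt (1 + c ^ 2) = y).
  { rewrite <- sqrt_mult by nra. rewrite <- Hy2. apply sqrt_pow2, Hy. }
  rewrite Hsqrt; unfold y; field; lra.
Qed.

Theorem mainTheorem13 :
  forall r : R -> R, is_cleaf 2 r ->
  forall l : R, r l <> -1 ->
  (r (l / 2)) ^ 2 = (-1 + r l + sqrt 2 * sqrt (1 + (r l) ^ 2)) / (1 + r l).
Proof.
  intros r [r' [Hr [Hr' [Hr0 Hr'0]]]] l Hl.
  pose proof (leaf2_duplication r r' Hr Hr' Hr0 Hr'0 (l / 2)) as Hdup.
  replace (2 * (l / 2)) with l in Hdup by field.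
  apply half_angle_root.
  - pose proof (leaf2_ge_neg1 r r' Hr Hr' Hr0 Hr'0 l); lra.
  - apply pow2_ge_0.
  - rewrite <- !pow_mult; exact Hdup.
Qed.
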